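(* Let $T$ be a tree on $n\ge 2$ vertices, $k\ge 3$ odd, and $M$ the order-$k$ Steiner distance hypermatrix of $T$. Then $M(\mathbf{c},\ldots,\mathbf{c})=0$ for every $\mathbf{c}\in\mathcal{H}_n$.
   Context: $T$ is a tree with vertex set $\{1,\dots,n\}$. For $U\subseteq V(T)$, the Steiner distance $S(U)$ is the minimum number of edges of a connected subgraph of $T$ whose vertex set contains $U$. The order-$k$ Steiner distance hypermatrix $M$ has entries $M_{(i_1,\dots,i_k)}=S(\{i_1,\dots,i_k\})$, and $M(\mathbf{x}_1,\dots,\mathbf{x}_k)=\sum_{\mathbf{i}\in V(T)^k}M_{\mathbf{i}}\prod_{j=1}^k x_{j i_j}$. $\mathcal{H}_n=\{\mathbf{c}\in\mathbb{R}^n:\sum_i c_i=0\}$. *)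

From mathcomp Require Import all_boot all_order all_algebra.
Set Implicit Arguments. Unset Strict Implicit. Unset Printing Implicit Defensive.
Import Order.TTheory GRing.Theory Num.Theory.

Definition is_tree (n : nat) (e : rel 'I_n) : Prop :=
  symmetric e /\ irreflexive e /\
  (forall x y : 'I_n, connect e x y) /\
  (forall p : seq 'I_n, uniq p -> 2 < size p -> ~~ cycle e p).

Definition is_subgraph n (e : rel 'I_n) (W : {set 'I_n}) (F : {set {set 'I_n}}) :=
  [forall f in F, exists x, exists y, [&& e x y, x \in W, y \in W & f == [set x; y]]].

Definition sub_rel n (W : {set 'I_n}) (F : {set {set 'I_n}}) : rel 'I_n :=
  fun u v => [&& u \in W, v \in W & [set u; v] \in F].

Definition is_connected_subgraph n (e : rel 'I_n) (W : {set 'I_n}) (F : {set {set 'I_n}}) :=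
  is_subgraph e W F &&
  [forall x in W, forall y in W, connect (sub_rel W F) x y].

(* Steiner distance: min number of edges of a connected subgraph whose vertex
   set contains U (default n is never attained for trees, since the whole tree
   qualifies with n-1 edges). *)
Definition steiner n (e : rel 'I_n) (U : {set 'I_n}) : nat :=
  \big[minn/n]_(p : {set 'I_n} * {set {set 'I_n}} |
                 is_connected_subgraph e p.1 p.2 && (U \subset p.1)) #|p.2|.

(* M(c,...,c) for the order-k Steiner distance hypermatrix. *)
Definition steiner_form (R : nzRingType) n k (e : rel 'I_n) (c : 'I_n -> R) : R :=
  \sum_(i : {ffun 'I_k -> 'I_n})
     (steiner e [set i j | j : 'I_k])%:R * \prod_(j : 'I_k) c (i j).

From mathcomp Require Import all_boot all_order all_algebra.
From mathcomp Require Import zify.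
Set Implicit Arguments. Unset Strict Implicit. Unset Printing Implicit Defensive.
Import Order.TTheory GRing.Theory Num.Theory.

(* In a tree, removing an edge {a, b} splits the vertices into the side A of a
   and its complement, and a connected subgraph containing U must use that edge
   exactly when U meets both sides; conversely the edges separating U already
   form a connected subgraph containing U.  Hence for nonempty U the Steiner
   distance is the number of edges separating U, and the indicator of "{a, b}
   separates U" is 1 - [U <= A] - [U <= ~A].  Summing against c(i_1)...c(i_k)
   over all k-tuples, each indicator [U <= B] factorises, so the contribution of
   an edge is (sum c)^k - s^k - (-s)^k with s the sum of c over A; this is
   0 - s^k + s^k = 0 when k is odd. *)

Lemma connect_until (T : finType) (g h : rel T) (P : pred T) :
    (forall s t, g s t -> h s t || P s) -> forall u v, connect g u v ->
  connect h u v \/ exists2 w, P w & connect h u w /\ connect g u w.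
Proof.
move=> gh u v /connectP[p gp ->]; elim: p u gp => [|y p IH] u /=.
  by left; apply: connect0.
move=> /andP[guy gp]; case/orP: (gh _ _ guy) => [huy|Pu]; last first.
  by right; exists u; rewrite ?connect0.
have [cyv|[w Pw [hyw gyw]]] := IH y gp; [left|right; exists w => //].
  exact: connect_trans (connect1 huy) cyv.
by split; [apply: connect_trans (connect1 huy) hyw | apply: connect_trans (connect1 guy) gyw].
Qed.

Lemma path_exit (T : eqType) (g : rel T) (A : pred T) u p :
    path g u p -> A u -> ~~ A (last u p) ->
  exists s t, [/\ g s t, A s, ~~ A t, s \in u :: p & t \in u :: p].
Proof.
elim: p u => [|y p IH] u /=; first by move=> _ ->.
move=> /andP[guy gp] Au nAl; case Ay: (A y).
  have [s [t [gst As nAt sp tp]]] := IH y gp Ay nAl.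
  by exists s, t; split; rewrite // inE ?sp ?tp orbT.
by exists u, y; rewrite Ay !inE !eqxx orbT.
Qed.

Definition straddles (T : finType) (A U : {set T}) :=
  ~~ (U \subset A) && ~~ (U \subset ~: A).

Lemma straddlesC (T : finType) (A U : {set T}) : straddles (~: A) U = straddles A U.
Proof. by rewrite /straddles setCK andbC. Qed.

Lemma straddlesP (T : finType) (A U : {set T}) :
  reflect (exists u v, [/\ u \in U, u \in A, v \in U & v \notin A]) (straddles A U).
Proof.
apply: (iffP andP) => [[/subsetPn[v vU vA] /subsetPn[u uU]]|[u [v [uU uA vU vA]]]].
  by rewrite inE negbK => uA; exists u, v.
by split; apply/subsetPn; [exists v | exists u; rewrite // inE negbK].
Qed.

Lemma sub_rel_sym n (W : {set 'I_n}) (F : {set {set 'I_n}}) : symmetric (sub_rel W F).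
Proof. by move=> u v; rewrite /sub_rel andbCA setUC. Qed.

Section Tree.
Variables (n : nat) (e : rel 'I_n).
Hypotheses (e_sym : symmetric e) (e_irr : irreflexive e)
  (e_conn : forall x y : 'I_n, connect e x y)
  (e_acyc : forall p : seq 'I_n, uniq p -> 2 < size p -> ~~ cycle e p).

Definition cut (f : {set 'I_n}) : rel 'I_n := fun s t => e s t && ([set s; t] != f).

Lemma connect_cutC f x y : connect (cut f) x y = connect (cut f) y x.
Proof. by apply: sym_connect_sym => s t; rewrite /cut e_sym setUC. Qed.

Lemma edge_set2 s t x y : [set s; t] = [set x; y] -> e x y -> e s t.
Proof.
move=> st_xy exy.
have : s \in [set x; y] by rewrite -st_xy set21.
have : t \in [set x; y] by rewrite -st_xy set22.
have : x \in [set s; t] by rewrite st_xy set21.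
have : y \in [set s; t] by rewrite st_xy set22.
by move=> /set2P[] ? /set2P[] ? /set2P[] ? /set2P[] ?; subst; rewrite // e_sym.
Qed.

Lemma cut_disconnects a b : e a b -> ~~ connect (cut [set a; b]) a b.
Proof.
move=> eab; apply/negP => /connectP[p cp lp].
case/shortenP: cp lp => p' cp' up' _ lp'.
have ep' : path e a p' by apply: sub_path cp' => s t /andP[].
apply: (negP (e_acyc up' _)); last by rewrite /= rcons_path ep' -lp' e_sym eab.
case: p' cp' {up' ep'} lp' => [|y [|z q]] //=; first by move=> _ ab; rewrite -ab e_irr in eab.
by rewrite andbT /cut => /andP[_] + b_y; rewrite -b_y eqxx.
Qed.

Lemma connect_cut_ends a b x : connect (cut [set a; b]) x a || connect (cut [set a; b]) x b.
Proof.
have cut_or_end s t : e s t -> cut [set a; b] s t || (s \in [set a; b]).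
  by move=> est; rewrite /cut est /=; case: eqP => // <-; rewrite set21 orbT.
by case: (connect_until cut_or_end (e_conn x a)) => [->|[w /set2P[]-> [-> _]]]; rewrite ?orbT.
Qed.

Lemma cut_crossing a b x y : e a b -> connect (cut [set a; b]) x a ->
  connect (cut [set a; b]) y b -> e x y -> [set x; y] = [set a; b].
Proof.
move=> eab cxa cyb exy; apply/eqP; apply: contraNT (cut_disconnects eab) => xy_ab.
rewrite connect_cutC in cxa.
by apply: connect_trans (connect_trans cxa (connect1 _)) cyb; rewrite /cut exy.
Qed.

Lemma path_cut x y z q : path e z q -> x \notin z :: q -> path (cut [set x; y]) z q.
Proof.
elim: q z => [|w q IH] z //= /andP[ezw ewq]; rewrite !inE !negb_or => /and3P[xz xw xq].
rewrite IH ?inE ?negb_or ?xw // andbT /cut ezw /=; apply/eqP => zw_xy.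
by have := set21 x y; rewrite -zw_xy => /set2P[] /eqP; rewrite ?(negbTE xz) ?(negbTE xw).
Qed.

Lemma path_cut_sides x p : path e x p -> uniq (x :: p) ->
  path (fun s t => connect (cut [set s; t]) x s && connect (cut [set s; t]) (last x p) t) x p.
Proof.
elim: p x => [//|y p IH] x /= /andP[exy ep] /andP[xNp up].
rewrite connect0 connect_cutC /=; apply/andP; split.
  by apply/connectP; exists p => //; apply: path_cut.
apply: (sub_in_path _ (allss (y :: p)) (IH y ep up)) => s t sp tp /andP[cys ->].
rewrite andbT; apply: connect_trans cys; apply: connect1; rewrite /cut exy /=.
apply: contraNneq xNp => xy_st; have := set21 x y; rewrite xy_st.
by case/set2P => ->.
Qed.

Definition side a b : {set 'I_n} := [set x | connect (cut [set a; b]) x a].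

Lemma sideC a b : e a b -> side b a = ~: side a b.
Proof.
move=> eab; apply/setP => x; rewrite !inE setUC.
have := connect_cut_ends a b x.
case cxa: (connect (cut [set a; b]) x a); case cxb: (connect (cut [set a; b]) x b) => //= _.
by rewrite connect_cutC in cxa; have := cut_disconnects eab; rewrite (connect_trans cxa cxb).
Qed.

Lemma path_crosses_cut (g : rel 'I_n) a b u q :
    subrel g e -> e a b -> u \in side a b -> last u q \notin side a b -> path g u q ->
  exists s t, [/\ g s t, [set s; t] = [set a; b], s \in u :: q & t \in u :: q].
Proof.
move=> ge eab uA vA gq.
have [s [t [gst sA tA sq tq]]] := path_exit (A := [in side a b]) gq uA vA.
exists s, t; split => //; apply: cut_crossing (ge _ _ gst) => //.
  by move: sA; rewrite inE.
by move: tA; rewrite -in_setC -sideC // inE setUC.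
Qed.

Definition edges := [set p : 'I_n * 'I_n | (p.1 < p.2) && e p.1 p.2].

Lemma edge_set_inj : {in edges &, injective (fun p => [set p.1; p.2])}.
Proof.
move=> [a b] [a' b']; rewrite !inE /= => /andP[lab _] /andP[lab' _] ab_ab'.
have : a \in [set a'; b'] by rewrite -ab_ab' set21.
have : b \in [set a'; b'] by rewrite -ab_ab' set22.
have : a' \in [set a; b] by rewrite ab_ab' set21.
by move=> /set2P[] ? /set2P[] ? /set2P[] ?; subst => //; lia.
Qed.

Definition sep_edges U := [set p in edges | straddles (side p.1 p.2) U].
Definition steiner_edges U := [set [set p.1; p.2] | p in sep_edges U].
Definition steiner_vertices U := U :|: \bigcup_(f in steiner_edges U) f.

Lemma card_steiner_edges U : #|steiner_edges U| = #|sep_edges U|.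
Proof.
by apply: card_in_imset => p q /setIdP[p_edge _] /setIdP[q_edge _]; apply: edge_set_inj.
Qed.

Lemma sep_edge_steiner U a b : (a, b) \in sep_edges U ->
  [/\ a \in steiner_vertices U, b \in steiner_vertices U & [set a; b] \in steiner_edges U].
Proof.
move=> sep_ab; have ab_F : [set a; b] \in steiner_edges U by apply/imsetP; exists (a, b).
by split; rewrite // inE; apply/orP; right; apply/bigcupP; exists [set a; b]; rewrite ?set21 ?set22.
Qed.

Lemma sub_rel_steiner U s t : e s t -> straddles (side s t) U ->
  sub_rel (steiner_vertices U) (steiner_edges U) s t.
Proof.
wlog lt_st : s t / s < t.
  move=> wlog_lt est sep; case: (ltngtP s t) => [lt_st|lt_ts|/val_inj st].
  - exact: wlog_lt lt_st est sep.
  - rewrite sub_rel_sym; apply: (wlog_lt t s lt_ts); first by rewrite e_sym.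
    by rewrite (sideC est) straddlesC.
  - by rewrite st e_irr in est.
move=> est sep.
have [sW tW stF] : [/\ s \in steiner_vertices U, t \in steiner_vertices U
                     & [set s; t] \in steiner_edges U].
  by apply: sep_edge_steiner; rewrite !inE /= lt_st est.
by rewrite /sub_rel sW tW.
Qed.

Lemma connect_uniq_path u v : exists p, [/\ path e u p, uniq (u :: p) & last u p = v].
Proof.
have /connectP[p ep ->] := e_conn u v.
by case/shortenP: ep => p' ep' up' _; exists p'.
Qed.

Lemma steiner_connect_path (U : {set 'I_n}) u p : u \in U -> last u p \in U -> path e u p ->
  uniq (u :: p) -> {subset u :: p <= connect (sub_rel (steiner_vertices U) (steiner_edges U)) u}.
Proof.
move=> uU vU ep up; apply: path_connect.
have : path [rel s t | e s t && (connect (cut [set s; t]) u s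
                                  && connect (cut [set s; t]) (last u p) t)] u p.
  by rewrite path_relI ep path_cut_sides.
apply: sub_path => s t /and3P[est cus cvt]; apply: sub_rel_steiner => //.
apply/straddlesP; exists u, (last u p); split; rewrite // ?inE //.
apply: contraNN (cut_disconnects est); rewrite connect_cutC => cvs.
exact: connect_trans cvs cvt.
Qed.

Lemma steiner_subgraph_connected U : U != set0 ->
  is_connected_subgraph e (steiner_vertices U) (steiner_edges U).
Proof.
move=> /set0Pn[u0 u0U]; set W := steiner_vertices U; set F := steiner_edges U.
have conn_U x : x \in U -> connect (sub_rel W F) u0 x.
  move=> xU; have [p [ep up lp]] := connect_uniq_path u0 x.
  by apply: (steiner_connect_path u0U _ ep up); rewrite ?lp // -lp mem_last.
have conn_W x : x \in W -> connect (sub_rel W F) u0 x.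
  rewrite inE => /orP[/conn_U // | /bigcupP[_ /imsetP[[a b] sep_ab ->] x_ab]].
  move: sep_ab; rewrite !inE /= => /andP[/andP[_ eab] /straddlesP[u [v [uU uA vU vA]]]].
  have [q [ep_q uq lq]] := connect_uniq_path u v.
  have vA' : last u q \notin side a b by rewrite lq.
  have [s [t [_ st_ab sq tq]]] := path_crosses_cut (fun _ _ => id) eab uA vA' ep_q.
  apply: connect_trans (conn_U u uU) (steiner_connect_path uU _ ep_q uq _); first by rewrite lq.
  by move: x_ab; rewrite -st_ab => /set2P[]->.
apply/andP; split.
  apply/forall_inP => _ /imsetP[[a b] sep_ab ->]; apply/existsP; exists a; apply/existsP; exists b.
  have [aW bW _] := sep_edge_steiner sep_ab.
  by move: sep_ab; rewrite /= aW bW eqxx !inE /= => /andP[/andP[_ ->]].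
apply/forall_inP => x xW; apply/forall_inP => y yW; apply: connect_trans (conn_W y yW).
by rewrite (sym_connect_sym (@sub_rel_sym n W F)) conn_W.
Qed.

Lemma card_sep_edges_le (U W : {set 'I_n}) F : is_connected_subgraph e W F -> U \subset W ->
  #|sep_edges U| <= #|F|.
Proof.
move=> /andP[/forall_inP F_edges /forall_inP W_conn] UW.
have sub_e : subrel (sub_rel W F) e.
  move=> s t /and3P[_ _ /F_edges/existsP[x /existsP[y /and4P[exy _ _ /eqP st_xy]]]].
  exact: edge_set2 st_xy exy.
rewrite -card_steiner_edges; apply/subset_leq_card/subsetP => _ /imsetP[[a b] sep_ab ->].
move: sep_ab; rewrite !inE /= => /andP[/andP[_ eab] /straddlesP[u [v [uU uA vU vA]]]].
have /forall_inP/(_ v (subsetP UW _ vU))/connectP[q gq lq] := W_conn u (subsetP UW _ uU).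
have vA' : last u q \notin side a b by rewrite -lq.
have [s [t [/and3P[_ _ stF] <- _ _]]] := path_crosses_cut sub_e eab uA vA' gq.
exact: stF.
Qed.

Definition far_end r (p : 'I_n * 'I_n) := if r \in side p.1 p.2 then p.2 else p.1.

Lemma far_endP r a b : e a b -> exists y, [/\ [set a; b] = [set far_end r (a, b); y],
  e (far_end r (a, b)) y & connect (cut [set far_end r (a, b); y]) r y].
Proof.
rewrite /far_end inE /= => eab; case: ifP => [cra|/negbT nra].
  by exists a; rewrite [[set b; a]]setUC e_sym.
by exists b; split => //; have := connect_cut_ends a b r; rewrite (negbTE nra).
Qed.

Lemma far_edge_unique r x y z : e x y -> e x z ->
  connect (cut [set x; y]) r y -> connect (cut [set x; z]) r z -> y = z.
Proof.
move=> exy exz cry crz; apply/eqP/negPn/negP => yz.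
have cut_y_z s t : cut [set x; y] s t -> cut [set x; z] s t || (s \in [set x; z]).
  by case/andP=> est _; rewrite /cut est /=; case: eqP => // <-; rewrite set21 orbT.
have cut_x w s : e x w -> x != w -> w != s -> cut [set x; s] x w.
  move=> exw xw ws; rewrite /cut exw /=; apply: contra ws => /eqP xw_xs.
  have := set22 x w; rewrite xw_xs => /set2P[wx|-> //].
  by rewrite wx eqxx in xw.
have xy : x != y by apply: contraTneq exy => ->; rewrite e_irr.
have xz : x != z by apply: contraTneq exz => ->; rewrite e_irr.
rewrite connect_cutC in cry.
case: (connect_until cut_y_z cry) => [cyr|[w /set2P[]-> [_ cyw]]].
- move/negP: (cut_disconnects exz); apply.
  exact: connect_trans (connect1 (cut_x _ _ exy xy yz)) (connect_trans cyr crz).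
- by move/negP: (cut_disconnects exy); rewrite connect_cutC.
- move/negP: (cut_disconnects exy); apply; rewrite connect_cutC.
  apply: connect_trans cyw (connect1 _); rewrite /cut e_sym setUC.
  by apply: cut_x; rewrite // eq_sym.
Qed.

Lemma far_end_inj r : {in edges &, injective (far_end r)}.
Proof.
move=> [a b] [a' b'] ab_edge ab'_edge same_far.
have := ab_edge; have := ab'_edge; rewrite !inE /= => /andP[_ eab'] /andP[_ eab].
have [y [ab_xy exy cry]] := @far_endP r _ _ eab.
have [z [ab'_xz exz crz]] := @far_endP r _ _ eab'.
rewrite -same_far in ab'_xz exz crz.
apply: edge_set_inj => //=; rewrite ab_xy ab'_xz.
by rewrite (far_edge_unique exy exz cry crz).
Qed.

(* [steiner] takes its minimum together with the default value [n]. *)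
Lemma card_edges_le : #|edges| <= n.
Proof.
have [->|/set0Pn[[r _] _]] := eqVneq edges set0; first by rewrite cards0.
rewrite -(card_in_imset (@far_end_inj r)); apply: leq_trans (max_card _) _.
by rewrite card_ord.
Qed.

Lemma steiner_tree U : U != set0 -> steiner e U = #|sep_edges U|.
Proof.
move=> U_neq0; apply/eqP; rewrite eqn_leq; apply/andP; split.
  rewrite -card_steiner_edges.
  have := @bigmin_le_cond _ nat _ n (steiner_vertices U, steiner_edges U).
  by apply; rewrite /= steiner_subgraph_connected // subsetUl.
apply: (@le_bigmin _ nat) => [|[W F] /andP[/card_sep_edges_le]]; last exact.
by apply: leq_trans card_edges_le; apply/subset_leq_card/subsetP => p /setIdP[].
Qed.

Lemma steiner_tree_sum (R : nzSemiRingType) U : U != set0 ->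
  ((steiner e U)%:R = \sum_(p in edges) (straddles (side p.1 p.2) U)%:R :> R)%R.
Proof.
move=> U_neq0; rewrite steiner_tree // -sum1_card natr_sum big_mkcond [RHS]big_mkcond.
by apply: eq_bigr => p _; rewrite inE; case: (p \in edges); case: straddles.
Qed.

End Tree.

Local Open Scope ring_scope.

Lemma imset_ffun_neq0 (T : finType) k (i : {ffun 'I_k -> T}) :
  (0 < k)%N -> [set i j | j : 'I_k] != set0.
Proof. by move=> k_gt0; apply/set0Pn; exists (i (Ordinal k_gt0)); apply: imset_f. Qed.

Lemma sum_subset_prod (R : comNzRingType) (T : finType) k (c : T -> R) (A : {set T}) :
  \sum_(i : {ffun 'I_k -> T}) ([set i j | j : 'I_k] \subset A)%:R * \prod_(j : 'I_k) c (i j)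
    = (\sum_(x in A) c x) ^+ k.
Proof.
have -> : (\sum_(x in A) c x) ^+ k = \prod_(j < k) \sum_x (x \in A)%:R * c x.
  rewrite prodr_const card_ord big_mkcond; congr (_ ^+ _).
  by apply: eq_bigr => x _; case: (x \in A); rewrite ?mul1r ?mul0r.
rewrite bigA_distr_bigA /=.
apply: eq_bigr => i _; rewrite big_split /=; congr (_ * _).
have [/subsetP iA|/subsetPn[_ /imsetP[j _ ->] ijA]] := boolP (_ \subset A).
  by rewrite big1 // => j _; rewrite iA ?imset_f.
by rewrite (bigD1 j) //= (negbTE ijA) mul0r.
Qed.

Lemma straddlesE (R : pzRingType) (T : finType) (A U : {set T}) : U != set0 ->
  (straddles A U)%:R = 1 - (U \subset A)%:R - (U \subset ~: A)%:R :> R.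
Proof.
move=> /set0Pn[u uU]; rewrite /straddles.
case: (boolP (U \subset A)) => [/subsetP UA|_]; case: (boolP (U \subset ~: A)) => //=.
- by move=> /subsetP/(_ u uU); rewrite inE UA.
- by rewrite subrr sub0r oppr0.
- by rewrite subr0 subrr.
- by rewrite !subr0.
Qed.

Lemma sum_straddles_prod_eq0 (R : comNzRingType) (T : finType) k (c : T -> R) (A : {set T}) :
    odd k -> \sum_x c x = 0 ->
  \sum_(i : {ffun 'I_k -> T}) (straddles A [set i j | j : 'I_k])%:R * \prod_(j : 'I_k) c (i j)
    = 0.
Proof.
move=> k_odd c_sum0; have k_gt0 := odd_gt0 k_odd.
under eq_bigr => i _ do rewrite straddlesE ?imset_ffun_neq0 // !mulrBl mul1r.
have sum_prod0 : \sum_(i : {ffun 'I_k -> T}) \prod_(j : 'I_k) c (i j) = 0.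
  transitivity ((\sum_(x in [set: T]) c x) ^+ k).
    by rewrite -sum_subset_prod; apply: eq_bigr => i _; rewrite subsetT mul1r.
  by rewrite (eq_bigl _ _ (@in_setT T)) c_sum0 expr0n gtn_eqF.
have sum_compl : \sum_(x in ~: A) c x = - \sum_(x in A) c x.
  apply/eqP; rewrite -addr_eq0 addrC; apply/eqP.
  by rewrite -[RHS]c_sum0 [RHS](bigID [in A]) /=; congr (_ + _); apply: eq_bigl => x; rewrite inE.
rewrite !sumrB sum_prod0 !sum_subset_prod sum_compl exprNn -signr_odd k_odd.
by rewrite expr1 mulN1r sub0r subrr.
Qed.

Theorem mainTheorem3 (R : realFieldType) (n k : nat) (e : rel 'I_n)
  (hT : is_tree e) (hn : (2 <= n)%N) (hk : (3 <= k)%N) (hodd : odd k)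
  (c : 'I_n -> R) (hc : \sum_(i : 'I_n) c i = 0) :
  steiner_form k e c = 0.
Proof.
have [e_sym [e_irr [e_conn e_acyc]]] := hT.
have k_gt0 := odd_gt0 hodd.
rewrite /steiner_form.
under eq_bigr => i _ do
  rewrite (steiner_tree_sum e_sym e_irr e_conn e_acyc R (imset_ffun_neq0 i k_gt0)) mulr_suml.
rewrite exchange_big big1 // => p _.
exact: sum_straddles_prod_eq0.
Qed.
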